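(* Let $n$ be a positive integer and let $A(n)=(a_{ij})_{i,j\in\mathbb{N}}$ be the greedy matrix described in the context. For every $i\geq 1$ there exists $j$ with $1\leq j\leq i$ and $a_{ij}=1$.
   Context: $\mathbb{N}=\{1,2,3,\dots\}$. Fix a positive integer $n$. The infinite $\{0,1\}$-matrix $A(n)=(a_{ij})_{i,j\in\mathbb{N}}$ is defined recursively. Its entries are determined row by row (row $1$ first), and within each row from left to right, so that $a_{kl}$ is determined after all $a_{ij}$ with $i<k$ and all $a_{kj}$ with $j<l$. One sets $a_{kl}=1$ if and only if all of the following hold: (1) $\sum_{j<l}a_{kj}<n+1$; (2) $\sum_{i<k}a_{il}<n+1$; (3) there is no pair $(i,j)$ with $1\le i<k$, $1\le j<l$ and $a_{ij}=a_{il}=a_{kj}=1$. Otherwise $a_{kl}=0$. *)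

From mathcomp Require Import all_boot.
Set Implicit Arguments. Unset Strict Implicit. Unset Printing Implicit Defensive.

(* Greedy matrix A(n), indices are positive naturals (1-based).
   [greedy_aux n N k l] computes a_{kl} whenever k + l <= N; every entry
   a_{ij} consulted in the rule for a_{kl} has i + j < k + l. *)
Fixpoint greedy_aux (n N k l : nat) {struct N} : bool :=
  match N with
  | 0 => false
  | N'.+1 =>
    let a := greedy_aux n N' in
    [&& 0 < k, 0 < l,
        (* (1) sum_{j<l} a_{kj} < n+1 *)
        \sum_(1 <= j < l) (a k j : nat) < n.+1,
        (* (2) sum_{i<k} a_{il} < n+1 *)
        \sum_(1 <= i < k) (a i l : nat) < n.+1 &
        (* (3) no rectangle (i,j),(i,l),(k,j) with i<k, j<l *)
        ~~ has (fun i => has (fun j => [&& a i j, a i l & a k j])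
                         (iota 1 l.-1))
              (iota 1 k.-1)]
  end.

(* The entry a_{kl} of A(n) (k, l >= 1; value false outside N x N). *)
Definition greedyA (n k l : nat) : bool := greedy_aux n (k + l) k l.

(* If row i of A(n) had no 1 in columns 1..i, then for each such column j the
   entry a_{ij} was refused although conditions (1) and (3) hold (row i is
   empty to the left of j), so condition (2) failed: column j already holds
   n+1 ones above row i.  The (i-1) x i block above row i would then contain
   i(n+1) ones, while by condition (1) each of its i-1 rows holds at most n+1. *)

From mathcomp Require Import all_boot.
From mathcomp Require Import zify.

Lemma greedy_aux_stable n N M k l :
  k + l <= N -> N <= M -> greedy_aux n N k l = greedy_aux n M k l.
Proof.
elim: N M k l => [|N IH] M k l hkl hNM.
  have -> : k = 0 by lia.
  by case: M hNM.
case: M hNM => [|M] // hNM /=.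
case: k hkl => [|k] //; case: l => [|l] // hkl.
rewrite (@eq_big_nat _ _ _ 1 l.+1 _ (fun j => greedy_aux n M k.+1 j : nat));
  last by move=> j /andP[_ hj]; rewrite (IH M) //; lia.
rewrite (@eq_big_nat _ _ _ 1 k.+1 _ (fun i => greedy_aux n M i l.+1 : nat));
  last by move=> i /andP[_ hi]; rewrite (IH M) //; lia.
congr [&& _, _, _, _ & ~~ _].
apply: eq_in_has => i; rewrite mem_iota => /andP[_ hi].
apply: eq_in_has => j; rewrite mem_iota => /andP[_ hj].
by rewrite !(IH M) //; lia.
Qed.

Lemma greedyA_rule n k l : 0 < k -> 0 < l ->
  greedyA n k l =
  [&& \sum_(1 <= j < l) (greedyA n k j : nat) < n.+1,
      \sum_(1 <= i < k) (greedyA n i l : nat) < n.+1 &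
      ~~ has (fun i => has (fun j => [&& greedyA n i j, greedyA n i l & greedyA n k j])
                          (iota 1 l.-1)) (iota 1 k.-1)].
Proof.
move=> hk hl; rewrite /greedyA.
have -> : k + l = (k + l).-1.+1 by lia.
rewrite [LHS]/= hk hl /=.
have stable i j : 0 < i <= k -> 0 < j <= l -> i + j < k + l ->
    greedy_aux n (k + l).-1 i j = greedy_aux n (i + j) i j.
  by move=> *; symmetry; apply: greedy_aux_stable; lia.
rewrite (@eq_big_nat _ _ _ 1 l _ (fun j => greedyA n k j : nat));
  last by move=> j /andP[hj1 hj]; rewrite stable //; lia.
rewrite (@eq_big_nat _ _ _ 1 k _ (fun i => greedyA n i l : nat));
  last by move=> i /andP[hi1 hi]; rewrite stable //; lia.
congr [&& _, _ & ~~ _].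
apply: eq_in_has => i; rewrite mem_iota => /andP[hi1 hi].
apply: eq_in_has => j; rewrite mem_iota => /andP[hj1 hj].
by rewrite /greedyA !stable //; lia.
Qed.

Lemma greedyA_row_sum_le n k L :
  0 < k -> \sum_(1 <= j < L) (greedyA n k j : nat) <= n.+1.
Proof.
move=> hk; elim: L => [|[|L] IH]; try by rewrite big_geq.
rewrite big_nat_recr //=.
case E: (greedyA n k L.+1); last by rewrite addn0.
by move: E; rewrite greedyA_rule // addn1 => /andP[].
Qed.

Lemma greedyA_column_full n k l : 0 < k -> 0 < l ->
  (forall j, 0 < j <= l -> greedyA n k j = false) ->
  n.+1 <= \sum_(1 <= i < k) (greedyA n i l : nat).
Proof.
move=> hk hl row0.
have := row0 l; rewrite greedyA_rule // hl leqnn.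
have -> : \sum_(1 <= j < l) (greedyA n k j : nat) = 0.
  by apply: big1_seq => j; rewrite mem_index_iota => /andP[_ hj]; rewrite row0 //; lia.
have -> : has (fun i => has (fun j => [&& greedyA n i j, greedyA n i l & greedyA n k j])
                (iota 1 l.-1)) (iota 1 k.-1) = false.
  apply/negbTE/hasPn => i _; apply/hasPn => j; rewrite mem_iota => /andP[hj1 hj].
  by rewrite row0 ?andbF //; lia.
by move=> /(_ isT); rewrite /= andbT ltnS => /negbT; rewrite -ltnNge.
Qed.

(* The counting argument works for n = 0 as well. *)
Theorem lemma3p4 (n : nat) (hn : 0 < n) (i : nat) (hi : 1 <= i) :
  exists j : nat, [/\ 1 <= j, j <= i & greedyA n i j = true].
Proof.
have [/hasP[j]|/hasPn row0] := boolP (has (greedyA n i) (iota 1 i)).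
  by rewrite mem_iota => /andP[hj1 hj] aij; exists j; split => //; lia.
have {}row0 j : 0 < j <= i -> greedyA n i j = false.
  by move=> hj; apply/negbTE/row0; rewrite mem_iota; lia.
have columns : i * n.+1 <= \sum_(1 <= j < i.+1) \sum_(1 <= r < i) (greedyA n r j : nat).
  have -> : i * n.+1 = \sum_(1 <= j < i.+1) n.+1 by rewrite sum_nat_const_nat subn1.
  rewrite !big_nat.
  apply: leq_sum => j /andP[hj1 hj]; apply: greedyA_column_full => // j' hj'.
  by apply: row0; lia.
have rows : \sum_(1 <= j < i.+1) \sum_(1 <= r < i) (greedyA n r j : nat) <= (i - 1) * n.+1.
  rewrite exchange_big_nat -sum_nat_const_nat !big_nat.
  by apply: leq_sum => r /andP[hr _]; exact: greedyA_row_sum_le.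
by have := leq_trans columns rows; rewrite leq_mul2r /=; lia.
Qed.
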